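(* Fix $\alpha\in(0,1)$, $d\ge2$, $a\in\mathbb{R}$, $w=(w_1,\dots,w_d)\in\mathbb{R}^d$, $\beta\in\mathbb{R}$, and $\Delta t>0$ with $\Delta t<1/C^2$ where $C=\max\{|a|,\max_i|w_i|\}$ (assume $C>0$). Define $T:\mathbb{R}^d\to\mathbb{R}^d$, $x\mapsto y$, by $y^{(i)}=x^{(i)}$ for $i=1,\dots,d-1$ and $y^{(d)}=x^{(d)}+a\,\Delta t\tanh(w\cdot x+\beta)$, where superscripts denote coordinates. Then for every compact $\mathcal{K}\subset\mathbb{R}^d$ and every $\varepsilon>0$ there exist $L\in\mathbb{N}$ and $f_L\in\mathcal{N}_d(L)$ with $\|T(x)-f_L(x)\|\le\varepsilon$ for all $x\in\mathcal{K}$.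
   Context: Leaky-ReLU: $\sigma_\alpha(x)=\max(\alpha x,x)$, applied componentwise. $\mathcal{N}_d(L)$ consists of all maps $f_L:\mathbb{R}^d\to\mathbb{R}^d$ defined recursively by $f_0(x)=W^{[0]}x+b^{[0]}$, $f_k(x)=W^{[k]}\sigma_\alpha(f_{k-1}(x))+b^{[k]}$ for $k=1,\dots,L$, with arbitrary $W^{[k]}\in\mathbb{R}^{d\times d}$, $b^{[k]}\in\mathbb{R}^d$. *)

From HB Require Import structures.
From mathcomp Require Import all_boot all_order all_algebra.
From mathcomp Require Import all_classical all_reals all_analysis.
Set Implicit Arguments. Unset Strict Implicit. Unset Printing Implicit Defensive.
Import Order.TTheory GRing.Theory Num.Theory.
Import numFieldNormedType.Exports.
Local Open Scope ring_scope.

Definition tanh {R : realType} (x : R) : R :=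
  (expR x - expR (- x)) / (expR x + expR (- x)).

Definition leaky {R : realType} (alpha x : R) : R := Num.max (alpha * x) x.

Definition leaky_vec {R : realType} {d : nat} (alpha : R) (v : 'cV[R]_d) : 'cV[R]_d :=
  \col_i leaky alpha (v i 0).

Fixpoint nn_eval {R : realType} {d : nat} (alpha : R)
  (W : nat -> 'M[R]_d) (b : nat -> 'cV[R]_d) (L : nat) (x : 'cV[R]_d) : 'cV[R]_d :=
  match L with
  | 0 => W 0%N *m x + b 0%N
  | k.+1 => W k.+1 *m leaky_vec alpha (nn_eval alpha W b k x) + b k.+1
  end.

Definition in_NN {R : realType} {d : nat} (alpha : R) (L : nat)
  (f : 'cV[R]_d -> 'cV[R]_d) : Prop :=
  exists (W : nat -> 'M[R]_d) (b : nat -> 'cV[R]_d), forall x, f x = nn_eval alpha W b L x.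

Definition enorm {R : realType} {d : nat} (v : 'cV[R]_d) : R :=
  Num.sqrt (\sum_i (v i 0) ^+ 2).

Definition dotv {R : realType} {d : nat} (w x : 'cV[R]_d) : R := \sum_i w i 0 * x i 0.

Definition Tmap {R : realType} {d : nat} (a dt beta : R) (w x : 'cV[R]_d) : 'cV[R]_d :=
  \col_i (if (val i == d.-1)%N then x i 0 + a * dt * tanh (dotv w x + beta) else x i 0).

(* If w_d <> 0, the invertible change of variables
   x |-> (x_1, ..., x_(d-1), w.x) turns T_d into (phi s - sum_(j<d) w_j x_j) / w_d, where s = w.x
   and phi s = s + w_d a dt tanh (s + beta). The condition dt < 1/C^2 gives |w_d a dt| < 1, so phi
   is increasing with slopes between 1 - |w_d a dt| and 1 + |w_d a dt|. Such a function is
   approximated on a compact interval by a scalar leaky-ReLU network: k iterations of sigma_alpha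
   multiply the negative half-line by alpha^k, which produces kinks with slope ratio alpha^k, and
   adding one kink per knot builds a piecewise linear interpolant of phi. The other coordinates,
   shifted to be nonnegative, pass unchanged through every activation, and the change of
   variables is absorbed into the first and last layers. If w_d = 0, replacing w_d by a small
   positive number moves T by little on the compact set. *)

From HB Require Import structures.
From mathcomp Require Import all_boot all_order all_algebra.
From mathcomp Require Import all_classical all_reals all_analysis.
From mathcomp Require Import ring lra.
Import Order.TTheory GRing.Theory Num.Theory.
Import numFieldNormedType.Exports.
Local Open Scope ring_scope.
Local Open Scope classical_set_scope.

Section Tanh.
Context {R : realType}.
Implicit Types u v x : R.

Let E x : R := expR x ^+ 2 + 1.

Let E_gt0 x : 0 < E x.
Proof. by rewrite ltr_wpDl ?sqr_ge0. Qed.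

Let tanhE x : tanh x = 1 - 2 / E x.
Proof.
rewrite /tanh /E expRN; field.
by rewrite !gt_eqF ?expR_gt0 ?E_gt0.
Qed.

Let dtanh x := 4 * expR x ^+ 2 / E x ^+ 2.

Let is_derive_tanh x : is_derive x 1 (fun y => 1 - 2 / E y) (dtanh x).
Proof.
have dE : is_derive x 1 E (2 * expR x * expR x).
  by apply: is_derive_eq; rewrite /GRing.scale /=; ring.
have := is_deriveV (lt0r_neq0 (E_gt0 x)) dE.
by move=> dV; apply: is_derive_eq; rewrite /dtanh /GRing.scale /=; field; rewrite gt_eqF.
Qed.

Lemma tanh_incr_lip {u v} : u <= v -> 0 <= tanh v - tanh u <= v - u.
Proof.
move=> uv.
have cont : {within `[u, v], continuous (fun y => 1 - 2 / E y)}.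
  by apply: derivable_within_continuous => x _; case: (is_derive_tanh x).
rewrite !tanhE.
have [c _ ->] := MVT_segment uv (fun x _ => is_derive_tanh x) cont.
have /andP[d0 d1] : 0 <= dtanh c <= 1.
  have Ec := E_gt0 c; have ec := expR_gt0 c.
  apply/andP; split; first by rewrite /dtanh divr_ge0 ?sqr_ge0 // mulr_ge0 ?sqr_ge0.
  rewrite /dtanh ler_pdivrMr ?exprn_gt0 // mul1r /E.
  by have := sqr_ge0 (expR c ^+ 2 - 1); nra.
have : 0 <= v - u by rewrite subr_ge0.
by nra.
Qed.

Lemma tanh_dist_le u v : `|tanh u - tanh v| <= `|u - v|.
Proof.
wlog uv : u v / u <= v.
  by move=> H; case: (leP u v) => [/H //| /ltW /H]; rewrite distrC (distrC u).
have /andP[h0 h1] := tanh_incr_lip uv.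
by rewrite distrC (distrC u) !ger0_norm // subr_ge0.
Qed.

End Tanh.

Section ScalarNetworks.
Context {R : realType} (alpha : R).

Fixpoint nn1_eval (q b : nat -> R) (L : nat) (u : R) : R :=
  match L with
  | 0 => q 0%N * u + b 0%N
  | k.+1 => q k.+1 * leaky alpha (nn1_eval q b k u) + b k.+1
  end.

Definition is_nn1 (f : R -> R) : Prop :=
  exists L q b, forall u, f u = nn1_eval q b L u.

Lemma eq_nn1_eval q b q' b' L :
  (forall i, (i <= L)%N -> q i = q' i /\ b i = b' i) ->
  nn1_eval q b L =1 nn1_eval q' b' L.
Proof.
elim: L => [|k IH] qb u /=; first by case: (qb 0%N) => // -> ->.
rewrite IH => [|i ik]; last exact/qb/leqW.
by case: (qb k.+1) => // -> ->.
Qed.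

Lemma is_nn1_eq {f g} : f =1 g -> is_nn1 f -> is_nn1 g.
Proof. by move=> fg [L [q [b fE]]]; exists L, q, b => u; rewrite -fg. Qed.

Lemma is_nn1_affine c e : is_nn1 (fun u => c * u + e).
Proof. by exists 0%N, (fun=> c), (fun=> e). Qed.

Lemma is_nn1_affine_post {f} c e : is_nn1 f -> is_nn1 (fun u => c * f u + e).
Proof.
move=> [L [q [b fE]]].
exists L, (fun i => if i == L then c * q i else q i),
  (fun i => if i == L then c * b i + e else b i) => u.
rewrite fE; case: L q b fE => [|k] q b _ /=; rewrite ?eqxx; first by ring.
rewrite (@eq_nn1_eval _ _ q b); first by ring.
by move=> i ik; rewrite ltn_eqF.
Qed.

Lemma is_nn1_leaky {f} : is_nn1 f -> is_nn1 (fun u => leaky alpha (f u)).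
Proof.
move=> [L [q [b fE]]].
exists L.+1, (fun i => if i == L.+1 then 1 else q i),
  (fun i => if i == L.+1 then 0 else b i) => u /=.
rewrite eqxx mul1r addr0 fE (@eq_nn1_eval _ _ q b) // => i iL.
by rewrite ltn_eqF ?ltnS.
Qed.

Lemma is_nn1_iter_leaky k {f} :
  is_nn1 f -> is_nn1 (fun u => iter k (leaky alpha) (f u)).
Proof.
move=> nn_f; elim: k => [|k IH] //.
by apply: (is_nn1_eq _ (is_nn1_leaky IH)) => u; rewrite iterS.
Qed.

Hypothesis alpha01 : 0 < alpha < 1.

Let alpha_gt0 : 0 < alpha. Proof. by case/andP: alpha01. Qed.
Let alpha_lt1 : alpha < 1. Proof. by case/andP: alpha01. Qed.

Lemma leaky_id {x : R} : 0 <= x -> leaky alpha x = x.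
Proof. by move=> x0; rewrite /leaky max_r // ler_piMl // ltW. Qed.

Lemma leaky_scale {x : R} : x <= 0 -> leaky alpha x = alpha * x.
Proof. by move=> x0; rewrite /leaky max_l // ler_niMl // ltW. Qed.

Lemma iter_leaky_id k {x : R} : 0 <= x -> iter k (leaky alpha) x = x.
Proof. by move=> x0; elim: k => //= k ->; rewrite leaky_id. Qed.

Lemma iter_leaky_scale k {x : R} : x <= 0 -> iter k (leaky alpha) x = alpha ^+ k * x.
Proof.
move=> x0; elim: k => [|k /= ->]; first by rewrite mul1r.
by rewrite leaky_scale ?exprS ?mulrA // mulr_ge0_le0 // exprn_ge0 // ltW.
Qed.

Lemma exists_expr_le {r : R} : 0 < r -> exists2 k, (0 < k)%N & alpha ^+ k <= r.
Proof.
move=> r0; have alpha_norm : `|alpha| < 1 by rewrite ger0_norm ?ltW.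
have [N _ small] := cvgr_le _ (cvg_expr alpha_norm) _ r0.
by exists N.+1 => //; apply: small => /=; rewrite leqnSn.
Qed.

Definition bend_down k c v : R := c - iter k (leaky alpha) (c - v).
Definition bend_up k c v : R := c + (alpha ^+ k)^-1 * iter k (leaky alpha) (v - c).

Lemma bend_down_le k {c v} : v <= c -> bend_down k c v = v.
Proof. by move=> vc; rewrite /bend_down iter_leaky_id ?subr_ge0 ?subKr. Qed.

Lemma bend_down_ge k {c v} : c <= v -> bend_down k c v = c + alpha ^+ k * (v - c).
Proof. by move=> cv; rewrite /bend_down iter_leaky_scale ?subr_le0 //; ring. Qed.

Lemma bend_up_le k {c v} : v <= c -> bend_up k c v = v.
Proof.
move=> vc; rewrite /bend_up iter_leaky_scale ?subr_le0 // mulKf ?subrKC //.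
by rewrite expf_neq0 ?gt_eqF.
Qed.

Lemma bend_up_ge k {c v} : c <= v -> bend_up k c v = c + (alpha ^+ k)^-1 * (v - c).
Proof. by move=> cv; rewrite /bend_up iter_leaky_id ?subr_ge0. Qed.

Lemma is_nn1_bend_down k c {f} : is_nn1 f -> is_nn1 (fun u => bend_down k c (f u)).
Proof.
move=> /(is_nn1_affine_post (-1) c)/(is_nn1_iter_leaky k)/(is_nn1_affine_post (-1) c).
by apply: is_nn1_eq => u; rewrite /bend_down !mulN1r !(addrC _ c).
Qed.

Lemma is_nn1_bend_up k c {f} : is_nn1 f -> is_nn1 (fun u => bend_up k c (f u)).
Proof.
move=> /(is_nn1_affine_post 1 (- c))/(is_nn1_iter_leaky k).
move=> /(is_nn1_affine_post (alpha ^+ k)^-1 c).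
by apply: is_nn1_eq => u; rewrite /bend_up mul1r (addrC _ c).
Qed.

(* Identity up to y0, then slope alpha ^+ k until the value y1 is reached, then slope 1. *)
Definition kink k y0 y1 v : R := bend_up k y1 (bend_down k y0 v).

Lemma is_nn1_kink k y0 y1 {f} : is_nn1 f -> is_nn1 (fun u => kink k y0 y1 (f u)).
Proof. by move=> nn_f; apply/is_nn1_bend_up/is_nn1_bend_down. Qed.

Lemma kink_id k {y0 y1 v} : y0 <= y1 -> v <= y0 -> kink k y0 y1 v = v.
Proof. by move=> y01 vy0; rewrite /kink bend_down_le // bend_up_le // (le_trans vy0). Qed.

Lemma kink_mid k {y0 y1 v} : y0 <= v -> y0 + alpha ^+ k * (v - y0) <= y1 ->
  kink k y0 y1 v = y0 + alpha ^+ k * (v - y0).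
Proof. by move=> y0v vy1; rewrite /kink bend_down_ge // bend_up_le. Qed.

Lemma kink_ge k {y0 y1 v} : y0 <= v -> y1 <= y0 + alpha ^+ k * (v - y0) ->
  kink k y0 y1 v = y1 + (alpha ^+ k)^-1 * (y0 + alpha ^+ k * (v - y0) - y1).
Proof. by move=> y0v y1v; rewrite /kink bend_down_ge // bend_up_ge. Qed.

End ScalarNetworks.

Definition bilipschitz_incr {R : realType} (phi : R -> R) (m l : R) : Prop :=
  forall u v, u <= v -> m * (v - u) <= phi v - phi u <= l * (v - u).

Lemma bilipschitz_incr_ub_gt0 {R : realType} {phi : R -> R} {m l : R} :
  0 < m -> bilipschitz_incr phi m l -> 0 < l.
Proof.
move=> m_gt0 phi_bilip; have /andP[lo hi] := phi_bilip _ _ (@ler01 R).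
by rewrite subr0 !mulr1 in lo hi; exact: lt_le_trans m_gt0 (le_trans lo hi).
Qed.

Section BilipschitzInterpolation.
Context {R : realType} (alpha : R) (phi : R -> R) (m l A E : R) (k : nat).
Hypotheses (alpha01 : 0 < alpha < 1) (m_gt0 : 0 < m) (E_gt0 : 0 < E)
  (k_gt0 : (0 < k)%N) (slope_small : alpha ^+ k * l <= m)
  (phi_bilip : bilipschitz_incr phi m l).

(* Beyond z, p is affine with the largest slope l, so that one kink can bend it onto phi. *)
Definition interpolates_upto (p : R -> R) (z : R) : Prop :=
  (forall u, A <= u <= z -> `|p u - phi u| <= E /\ p u <= phi z) /\
  (forall u, z <= u -> p u = phi z + l * (u - z)).

Let l_gt0 : 0 < l := bilipschitz_incr_ub_gt0 m_gt0 phi_bilip.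

Let phi_mono {u v} : u <= v -> phi u <= phi v.
Proof.
move=> uv; rewrite -subr_ge0; have /andP[+ _] := phi_bilip _ _ uv; apply: le_trans.
by rewrite mulr_ge0 ?subr_ge0 // ltW.
Qed.

Let h := E / l.
Let h_gt0 : 0 < h. Proof. by rewrite divr_gt0. Qed.
Let lh : l * h = E. Proof. by rewrite /h mulrC divfK ?gt_eqF. Qed.

Let a := alpha ^+ k.
Let a_gt0 : 0 < a. Proof. by rewrite exprn_gt0 //; case/andP: alpha01. Qed.
Let a_lt1 : a < 1. Proof. by rewrite expr_lt1 ?ltW -?lt0n //; case/andP: alpha01. Qed.
Let al_gt0 : 0 < a * l. Proof. by rewrite mulr_gt0. Qed.

(* Slope l on [z, z + t], then a * l on [z + t, z + h]: this reaches phi (z + h) for some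
   t in [0, h] because a * l <= m <= (phi (z + h) - phi z) / h <= l. *)
Let knot z : exists2 t, 0 <= t <= h & phi (z + h) = phi z + l * t + a * l * (h - t).
Proof.
have z_le : z <= z + h by rewrite lerDl ltW.
have /andP[D_lo D_hi] : m * h <= phi (z + h) - phi z <= l * h.
  by have := phi_bilip _ _ z_le; rewrite addrC addKr.
have al_lt_l : a * l < l by rewrite gtr_pMl.
have al_le_m : a * l * h <= m * h by rewrite ler_pM2r.
exists ((phi (z + h) - phi z - a * l * h) / (l - a * l)); last first.
  by field; rewrite subr_eq0 gt_eqF.
rewrite divr_ge0 ?subr_ge0 ?(le_trans al_le_m D_lo) ?(ltW al_lt_l) //=.
by rewrite ler_pdivrMr ?subr_gt0 //; nra.
Qed.

Section Step.
Variables (p : R -> R) (z t : R).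
Hypotheses (p_interp : interpolates_upto p z) (t_ge0 : 0 <= t) (t_le_h : t <= h)
  (knot_eq : phi (z + h) = phi z + l * t + a * l * (h - t)).

Let y0 := phi z + l * t.

Let y0_le_knot : y0 <= phi (z + h).
Proof. by rewrite knot_eq lerDl mulr_ge0 ?subr_ge0 // ltW. Qed.

Let p_tail u : z <= u -> p u = y0 + l * (u - z - t).
Proof. by move=> zu; case: p_interp => _ -> //; rewrite /y0; ring. Qed.

Let kink_mid_tail u : z + t <= u -> u <= z + h ->
  kink alpha k y0 (phi (z + h)) (p u) = y0 + a * l * (u - z - t).
Proof.
move=> ztu uzh; have zu : z <= u by apply: le_trans ztu; rewrite lerDl.
have ut_ge0 : 0 <= l * (u - z - t) by rewrite mulr_ge0 ?(ltW l_gt0) // subr_ge0 lerBrDl.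
have tail_eq : y0 + alpha ^+ k * (y0 + l * (u - z - t) - y0) = y0 + a * l * (u - z - t).
  by rewrite /a; ring.
rewrite (p_tail u zu) kink_mid ?tail_eq ?lerDl // knot_eq -/y0 lerD2l ler_pM2l //.
by rewrite lerD2r lerBlDl.
Qed.

Let kink_between u : z <= u <= z + h ->
  phi z <= kink alpha k y0 (phi (z + h)) (p u) <= phi (z + h).
Proof.
case/andP=> zu uzh; have [uzt | ztu] := leP u (z + t).
  have lu_le : l * (u - z - t) <= 0 by rewrite mulr_ge0_le0 ?(ltW l_gt0) // subr_le0 lerBlDl.
  rewrite (p_tail u zu) kink_id ?gerDl //; apply/andP; split.
    rewrite /y0 -addrA lerDl -mulrDr [t + _]addrC subrK.
    by rewrite mulr_ge0 ?(ltW l_gt0) // subr_ge0.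
  by apply: le_trans y0_le_knot; rewrite gerDl.
rewrite kink_mid_tail ?(ltW ztu) //; apply/andP; split.
  apply: le_trans (_ : phi z <= y0) _; first by rewrite lerDl mulr_ge0 // ltW.
  by rewrite lerDl mulr_ge0 ?(ltW al_gt0) // subr_ge0 lerBrDl (ltW ztu).
by rewrite knot_eq -/y0 lerD2l ler_pM2l // lerD2r lerBlDl.
Qed.

Lemma interpolates_kink :
  interpolates_upto (fun u => kink alpha k y0 (phi (z + h)) (p u)) (z + h).
Proof.
case: p_interp => p_approx _; split=> [u /andP[Au uzh] | u zhu]; last first.
  have zu : z <= u by apply: le_trans zhu; rewrite lerDl ltW.
  have ut_ge0 : 0 <= u - z - t.
    by rewrite subr_ge0 lerBrDl (le_trans _ zhu) // lerD2l.
  have tail_eq : y0 + a * (y0 + l * (u - z - t) - y0) = y0 + a * l * (u - z - t).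
    by ring.
  rewrite (p_tail u zu) kink_ge -/a ?tail_eq ?lerDl ?mulr_ge0 ?(ltW l_gt0) //.
    by rewrite knot_eq /y0 /a; field; rewrite gt_eqF.
  by rewrite knot_eq -/y0 lerD2l ler_pM2l // lerD2r lerBrDl.
have [uz | zu] := leP u z.
  have [err pu_le] := p_approx u (introT andP (conj Au uz)).
  have pu_y0 : p u <= y0 by apply: le_trans pu_le _; rewrite lerDl mulr_ge0 // ltW.
  rewrite kink_id //; split=> //; apply: (le_trans pu_le (phi_mono _)).
  by rewrite lerDl ltW.
have /andP[q_lo q_hi] := kink_between u (introT andP (conj (ltW zu) uzh)).
have phiu_lo : phi z <= phi u := phi_mono (ltW zu).
have phiu_hi : phi u <= phi (z + h) := phi_mono uzh.
have /andP[_ D_hi] : m * h <= phi (z + h) - phi z <= l * h.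
  by have := phi_bilip _ _ (le_trans (ltW zu) uzh); rewrite addrC addKr.
split=> //; rewrite -lh ler_norml; apply/andP; split; lra.
Qed.

End Step.

Lemma interpolates_step {p z} : is_nn1 alpha p -> interpolates_upto p z ->
  exists2 q, is_nn1 alpha q & interpolates_upto q (z + h).
Proof.
move=> nn_p p_interp; have [t /andP[t_ge0 t_le_h] knot_eq] := knot z.
by exists (fun u => kink alpha k (phi z + l * t) (phi (z + h)) (p u));
  [exact: is_nn1_kink | exact: interpolates_kink].
Qed.

Lemma interpolates_upto_nat n :
  exists2 p, is_nn1 alpha p & interpolates_upto p (A + n%:R * h).
Proof.
elim: n => [|n [p nn_p p_interp]].
  exists (fun u => l * u + (phi A - l * A)); first exact: is_nn1_affine.
  rewrite mul0r addr0; split=> [u /andP[Au uA] | u _]; last by ring.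
  have -> : u = A by apply/eqP; rewrite eq_le uA Au.
  rewrite addrCA subrr addr0 subrr normr0; split=> //; exact: ltW.
have [q nn_q q_interp] := interpolates_step nn_p p_interp.
by exists q; rewrite // -natr1 mulrDl mul1r addrA.
Qed.

Lemma interpolates_on B :
  exists2 p, is_nn1 alpha p & forall u, A <= u <= B -> `|p u - phi u| <= E.
Proof.
set n := (Num.truncn ((B - A) / h)).+1.
have B_le : B <= A + n%:R * h.
  by rewrite -lerBlDl -ler_pdivrMr // ltW // truncnS_gt.
have [p nn_p [p_approx _]] := interpolates_upto_nat n.
exists p => // u /andP[Au uB].
by have [] := p_approx u; rewrite ?Au ?(le_trans uB).
Qed.

End BilipschitzInterpolation.

Lemma nn1_approx_bilipschitz {R : realType} {alpha : R} {phi : R -> R} {m l : R} :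
  0 < alpha < 1 -> 0 < m -> bilipschitz_incr phi m l ->
  forall A B E, 0 < E ->
  exists2 p, is_nn1 alpha p & forall u, A <= u <= B -> `|p u - phi u| <= E.
Proof.
move=> alpha01 m_gt0 phi_bilip A B E E_gt0.
have l_gt0 := bilipschitz_incr_ub_gt0 m_gt0 phi_bilip.
have [k k_gt0 small] := exists_expr_le _ alpha01 (divr_gt0 m_gt0 l_gt0).
apply: (interpolates_on _ _ _ _ _ _ k alpha01 m_gt0 E_gt0 k_gt0 _ phi_bilip).
by rewrite -ler_pdivlMr.
Qed.

Section VectorNetworks.
Context {R : realType} {d : nat} (alpha : R).

Lemma eq_nn_eval (W W' : nat -> 'M[R]_d) (b b' : nat -> 'cV[R]_d) L :
  (forall i, (i <= L)%N -> W i = W' i /\ b i = b' i) ->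
  nn_eval alpha W b L =1 nn_eval alpha W' b' L.
Proof.
elim: L => [|k IH] Wb x /=; first by case: (Wb 0%N) => // -> ->.
rewrite IH => [|i ik]; last exact/Wb/leqW.
by case: (Wb k.+1) => // -> ->.
Qed.

Lemma nn_eval_mulmx_input (P : 'M[R]_d) W b L x :
  nn_eval alpha (fun k => if k == 0%N then W k *m P else W k) b L x =
  nn_eval alpha W b L (P *m x).
Proof. by elim: L => [|k IH] /=; rewrite ?mulmxA ?IH. Qed.

Lemma nn_eval_affine_output (Q : 'M[R]_d) (c : 'cV[R]_d) W b L x :
  nn_eval alpha (fun k => if k == L then Q *m W k else W k)
                (fun k => if k == L then Q *m b k + c else b k) L x =
  Q *m nn_eval alpha W b L x + c.
Proof.
case: L => [|k] /=; first by rewrite mulmxDr mulmxA addrA.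
rewrite eqxx (@eq_nn_eval _ W _ b) => [|i ik]; last by rewrite ltn_eqF.
by rewrite mulmxDr mulmxA addrA.
Qed.

Lemma in_NN_affine_conj (P Q : 'M[R]_d) (c : 'cV[R]_d) L f :
  in_NN alpha L f -> in_NN alpha L (fun x => Q *m f (P *m x) + c).
Proof.
case=> W [b fE].
exists (fun k => if k == L then Q *m (if k == 0%N then W k *m P else W k)
                 else if k == 0%N then W k *m P else W k),
  (fun k => if k == L then Q *m b k + c else b k) => x.
by rewrite nn_eval_affine_output nn_eval_mulmx_input fE.
Qed.

End VectorNetworks.

Section LiftLast.
Context {R : realType} {n : nat} (alpha : R).
Hypothesis alpha01 : 0 < alpha < 1.

Definition lift_last_W (q : nat -> R) k : 'M[R]_n.+1 :=
  diag_mx (\row_i (if i == ord_max then q k else 1)).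

(* The first layer shifts the other coordinates by M, which keeps them nonnegative and hence
   fixed by every activation. *)
Definition lift_last_b (b : nat -> R) (M : R) k : 'cV[R]_n.+1 :=
  \col_i (if i == ord_max then b k else if k == 0%N then M else 0).

Lemma nn_eval_lift_last q b M L (y : 'cV[R]_n.+1) :
  (forall i, i != ord_max -> 0 <= y i 0 + M) ->
  nn_eval alpha (lift_last_W q) (lift_last_b b M) L y =
  \col_i (if i == ord_max then nn1_eval alpha q b L (y ord_max 0) else y i 0 + M).
Proof.
move=> yM; elim: L => [|k IH] /=; apply/matrixP => i j; rewrite (ord1 j).
  by rewrite mul_diag_mx !mxE; case: eqP => [->|_] //; rewrite mul1r.
rewrite IH mul_diag_mx !mxE; case: ifP => // i_last.
by rewrite mul1r addr0 leaky_id // yM // i_last.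
Qed.

Lemma in_NN_lift_last (p : R -> R) (M : R) : is_nn1 alpha p ->
  exists L f, in_NN alpha L f /\
  forall y : 'cV[R]_n.+1, (forall i, i != ord_max -> - M <= y i 0) ->
  f y = \col_i (if i == ord_max then p (y ord_max 0) else y i 0).
Proof.
case=> L [q [b pE]].
pose shift : 'cV[R]_n.+1 := \col_i (if i == ord_max then 0 else - M).
exists L, (fun y => 1%:M *m nn_eval alpha (lift_last_W q) (lift_last_b b M) L (1%:M *m y) + shift).
split; first by apply: in_NN_affine_conj; exists (lift_last_W q), (lift_last_b b M).
move=> y yM; rewrite !mul1mx nn_eval_lift_last => [|i /yM]; last by rewrite -lerBlDr sub0r.
by apply/matrixP => i j; rewrite !mxE; case: ifP; rewrite ?pE ?addr0 ?addrK.
Qed.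

End LiftLast.

Section LastCoordinateChange.
Context {R : realType} {n : nat}.
Implicit Types w x v : 'cV[R]_n.+1.

Definition dotv_but_last w x : R := \sum_(j | j != ord_max) w j 0 * x j 0.

Lemma dotv_split_last w x : dotv w x = w ord_max 0 * x ord_max 0 + dotv_but_last w x.
Proof. exact: bigD1. Qed.

Definition dot_last_mx w : 'M[R]_n.+1 :=
  \matrix_(i, j) (if i == ord_max then w j 0 else 1%:M i j).

(* The inverse of dot_last_mx w when w ord_max 0 != 0. *)
Definition undot_last_mx w : 'M[R]_n.+1 :=
  \matrix_(i, j) (if i == ord_max then
    (if j == ord_max then (w ord_max 0)^-1 else - w j 0 / w ord_max 0)
    else 1%:M i j).

Lemma mul_dot_last_mx w x i :
  (dot_last_mx w *m x) i 0 = if i == ord_max then dotv w x else x i 0.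
Proof.
rewrite -[in x i 0](mul1mx x) !mxE.
have [-> | /negbTE i_last] := eqVneq i ord_max; apply: eq_bigr => j _.
  by rewrite mxE eqxx.
by rewrite mxE i_last.
Qed.

Lemma mul_undot_last_mx w v i : i != ord_max -> (undot_last_mx w *m v) i 0 = v i 0.
Proof.
move=> /negbTE i_last; rewrite -[in v i 0](mul1mx v) !mxE.
by apply: eq_bigr => j _; rewrite mxE i_last.
Qed.

Lemma mul_undot_last_mx_last w v :
  (undot_last_mx w *m v) ord_max 0 = (v ord_max 0 - dotv_but_last w v) / w ord_max 0.
Proof.
rewrite mxE (bigD1 ord_max) //= !mxE !eqxx mulrBl mulrC; congr (_ + _).
rewrite /dotv_but_last mulr_suml -sumrN; apply: eq_bigr => j /negbTE j_last.
by rewrite mxE eqxx j_last; ring.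
Qed.

End LastCoordinateChange.

Lemma bilipschitz_incr_tanh_shift {R : realType} (kappa beta : R) :
  `|kappa| < 1 ->
  bilipschitz_incr (fun s => s + kappa * tanh (s + beta)) (1 - `|kappa|) (1 + `|kappa|).
Proof.
move=> _ u v uv.
have uv_beta : u + beta <= v + beta by rewrite lerD2r.
have /andP[T_ge0 T_le] := tanh_incr_lip uv_beta.
have kT_le : `|kappa * (tanh (v + beta) - tanh (u + beta))| <= `|kappa| * (v - u).
  by rewrite normrM (ger0_norm T_ge0) ler_wpM2l //; lra.
move: kT_le; rewrite ler_norml => /andP[lo hi].
have -> : v + kappa * tanh (v + beta) - (u + kappa * tanh (u + beta)) =
  (v - u) + kappa * (tanh (v + beta) - tanh (u + beta)) by ring.
by apply/andP; split; lra.
Qed.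

Section TmapLast.
Context {R : realType} {n : nat} (a dt beta : R).
Implicit Types w x : 'cV[R]_n.+1.

Lemma Tmap_but_last w x {i} : i != ord_max -> Tmap a dt beta w x i 0 = x i 0.
Proof.
by move=> i_last; rewrite mxE ifF //; apply: contraNF i_last => /eqP i_n; apply/eqP/val_inj.
Qed.

Lemma Tmap_last w x :
  Tmap a dt beta w x ord_max 0 = x ord_max 0 + a * dt * tanh (dotv w x + beta).
Proof. by rewrite mxE /= eqxx. Qed.

Lemma Tmap_last_dotv w x : w ord_max 0 != 0 ->
  Tmap a dt beta w x ord_max 0 =
  (dotv w x + w ord_max 0 * a * dt * tanh (dotv w x + beta) - dotv_but_last w x) / w ord_max 0.
Proof.
move=> w_nz; rewrite Tmap_last; set s := dotv w x.
have -> : dotv_but_last w x = s - w ord_max 0 * x ord_max 0.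
  by rewrite /s dotv_split_last; ring.
by field.
Qed.

Lemma enorm_Tmap_sub w x (v : 'cV[R]_n.+1) :
  (forall i, i != ord_max -> v i 0 = x i 0) ->
  enorm (Tmap a dt beta w x - v) = `|Tmap a dt beta w x ord_max 0 - v ord_max 0|.
Proof.
move=> v_but_last; rewrite /enorm (bigD1 ord_max) //= big1 ?addr0 => [|i i_last].
  by rewrite !mxE sqrtr_sqr.
have := Tmap_but_last w x i_last; rewrite mxE => Ti.
by rewrite !mxE Ti v_but_last // subrr expr0n.
Qed.

End TmapLast.

Lemma compact_coord_bounded {R : realType} {d : nat} {K : set 'cV[R]_d} :
  compact K -> exists2 M : R, 0 <= M & forall x, K x -> forall i, `|x i 0| <= M.
Proof.
move=> /compact_bounded[N [_ N_bound]].
have N_lt : N < `|N| + 1 by rewrite (le_lt_trans (ler_norm N)) ?ltrDl.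
exists (`|N| + 1) => [|x Kx i]; first by rewrite addr_ge0.
apply: le_trans (N_bound _ N_lt x Kx); rewrite [`|x|]mx_normrE.
exact: (le_bigmax _ (fun ij : 'I_d * 'I_1 => `|x ij.1 ij.2|) (i, 0)).
Qed.

Lemma norm_dotv_le {R : realType} {d : nat} (w x : 'cV[R]_d) (M : R) :
  (forall i, `|x i 0| <= M) -> `|dotv w x| <= \sum_i `|w i 0| * M.
Proof.
move=> x_bound; apply: le_trans (ler_norm_sum _ _ _) _.
by apply: ler_sum => i _; rewrite normrM ler_wpM2l.
Qed.

Lemma Tmap_approx_last_nz {R : realType} {n : nat} {alpha a dt : R} (beta : R)
    {w : 'cV[R]_n.+1} {K : set 'cV[R]_n.+1} {M eps : R} :
  0 < alpha < 1 -> w ord_max 0 != 0 -> `|w ord_max 0 * a * dt| < 1 ->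
  (forall x, K x -> forall i, `|x i 0| <= M) -> 0 < eps ->
  exists L f, in_NN alpha L f /\ forall x, K x ->
    (forall i, i != ord_max -> f x i 0 = x i 0) /\
    `|Tmap a dt beta w x ord_max 0 - f x ord_max 0| <= eps.
Proof.
move=> alpha01 w_nz w_small K_bound eps_gt0.
set wl := w ord_max 0 in w_nz w_small *; set S := \sum_i `|w i 0| * M.
have m_gt0 : 0 < 1 - `|wl * a * dt| by rewrite subr_gt0.
have E_gt0 : 0 < eps * `|wl| by rewrite mulr_gt0 ?normr_gt0.
have [p nn_p p_approx] := nn1_approx_bilipschitz alpha01 m_gt0
  (bilipschitz_incr_tanh_shift _ beta w_small) (- S) S _ E_gt0.
have [L [g [nn_g gE]]] := in_NN_lift_last (n := n) _ alpha01 _ M nn_p.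
exists L, (fun x => undot_last_mx w *m g (dot_last_mx w *m x) + 0).
split=> [|x Kx]; first exact: (in_NN_affine_conj _ (dot_last_mx w) (undot_last_mx w) 0 _ _ nn_g).
have gx : g (dot_last_mx w *m x) = \col_i (if i == ord_max then p (dotv w x) else x i 0).
  rewrite gE => [|i i_last]; last first.
    by rewrite mul_dot_last_mx (negbTE i_last) lerNnormlW ?K_bound.
  by apply/matrixP => i j; rewrite [LHS]mxE [RHS]mxE !mul_dot_last_mx eqxx; case: (i == ord_max).
rewrite addr0 gx; split=> [i i_last|]; first by rewrite mul_undot_last_mx // mxE (negbTE i_last).
have dot_S : - S <= dotv w x <= S by rewrite -ler_norml; exact: norm_dotv_le (K_bound x Kx).
rewrite mul_undot_last_mx_last Tmap_last_dotv // !mxE eqxx -/wl.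
have -> : dotv_but_last w (\col_i (if i == ord_max then p (dotv w x) else x i 0)) =
    dotv_but_last w x.
  by apply: eq_bigr => j /negbTE j_last; rewrite mxE j_last.
rewrite -mulrBl normrM normrV ?unitfE // ler_pdivrMr ?normr_gt0 //.
set s := dotv w x; set s' := dotv_but_last w x.
have -> : s + wl * a * dt * tanh (s + beta) - s' - (p s - s') =
    - (p s - (s + wl * a * dt * tanh (s + beta))) by ring.
by rewrite normrN p_approx.
Qed.

Lemma Tmap_perturb_last {R : realType} {n : nat} {a dt beta : R} {w : 'cV[R]_n.+1}
    {K : set 'cV[R]_n.+1} {M eps : R} :
  w ord_max 0 = 0 -> 0 <= M -> (forall x, K x -> `|x ord_max 0| <= M) -> 0 < eps ->
  exists w' : 'cV[R]_n.+1, [/\ w' ord_max 0 != 0, `|w' ord_max 0 * a * dt| < 1 &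
    forall x, K x -> `|Tmap a dt beta w x ord_max 0 - Tmap a dt beta w' x ord_max 0| <= eps].
Proof.
move=> w_last0 M_ge0 K_bound eps_gt0.
set c := `|a * dt|; set e := Num.min eps 1.
have c_ge0 : 0 <= c := normr_ge0 _.
have e_gt0 : 0 < e by rewrite lt_min eps_gt0 ltr01.
have e_le_eps : e <= eps by rewrite ge_min lexx.
have e_le1 : e <= 1 by rewrite ge_min lexx orbT.
have den_gt0 : 0 < c * (M + 1) + 1 by rewrite ltr_wpDl ?mulr_ge0 ?addr_ge0.
set ep := e / (c * (M + 1) + 1).
have ep_gt0 : 0 < ep by rewrite divr_gt0.
have ep_den : ep * (c * (M + 1)) + ep = e by rewrite -[X in _ + X]mulr1 -mulrDr divfK ?gt_eqF.
pose w' : 'cV[R]_n.+1 := \col_i (w i 0 + (if i == ord_max then ep else 0)).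
have w'_last : w' ord_max 0 = ep by rewrite mxE eqxx w_last0 add0r.
exists w'; split=> [||x Kx]; rewrite ?w'_last ?gt_eqF //.
  by rewrite -mulrA normrM (gtr0_norm ep_gt0) -/c; nra.
have dot_w' : dotv w' x = dotv w x + ep * x ord_max 0.
  rewrite !dotv_split_last w'_last w_last0 mul0r add0r addrC; congr (_ + _).
  by apply: eq_bigr => j /negbTE j_last; rewrite mxE j_last addr0.
rewrite !Tmap_last dot_w' opprD addrACA subrr add0r -mulrBr normrM -/c.
have := tanh_dist_le (dotv w x + beta) (dotv w x + ep * x ord_max 0 + beta).
have -> : dotv w x + beta - (dotv w x + ep * x ord_max 0 + beta) = - (ep * x ord_max 0).
  by ring.
rewrite normrN normrM (gtr0_norm ep_gt0) => T_le.
apply: le_trans (ler_wpM2l c_ge0 T_le) _.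
have : c * (ep * `|x ord_max 0|) <= c * (ep * M).
  by rewrite ler_wpM2l // ler_wpM2l ?K_bound // ltW.
have : 0 <= ep * c by rewrite mulr_ge0 // ltW.
by lra.
Qed.

Lemma norm_mul_lt1 {R : realFieldType} (x y dt C : R) :
  0 < C -> `|x| <= C -> `|y| <= C -> 0 < dt -> dt < 1 / C ^+ 2 -> `|x * y * dt| < 1.
Proof.
move=> C_gt0 x_le y_le dt_gt0; rewrite ltr_pdivlMr ?exprn_gt0 // => dtC.
rewrite !normrM (gtr0_norm dt_gt0); apply: le_lt_trans dtC.
by rewrite mulrC expr2 ler_wpM2l ?(ltW dt_gt0) // ler_pM ?normr_ge0.
Qed.

Theorem mainTheorem9 (R : realType) (alpha : R) (d : nat) (a : R) (w : 'cV[R]_d)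
  (beta dt : R) :
  0 < alpha < 1 -> (2 <= d)%N ->
  let C := Num.max `|a| (\big[Num.max/0]_(i < d) `|w i 0|) in
  0 < C -> 0 < dt -> dt < 1 / C ^+ 2 ->
  forall (K : set 'cV[R]_d), compact K ->
  forall eps : R, 0 < eps ->
  exists (L : nat) (f : 'cV[R]_d -> 'cV[R]_d),
    in_NN alpha L f /\
    forall x, K x -> enorm (Tmap a dt beta w x - f x) <= eps.
Proof.
move: w; case: d => [//|n] w alpha01 _ C C_gt0 dt_gt0 dt_lt K K_compact eps eps_gt0.
have [M M_ge0 K_bound] := compact_coord_bounded K_compact.
have eps2_gt0 : 0 < eps / 2 by rewrite divr_gt0.
have [w' [w'_nz w'_small w'_close]] : exists w' : 'cV[R]_n.+1, [/\ w' ord_max 0 != 0,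
    `|w' ord_max 0 * a * dt| < 1 &
    forall x, K x -> `|Tmap a dt beta w x ord_max 0 - Tmap a dt beta w' x ord_max 0| <= eps / 2].
  have [w_last0 | w_nz] := eqVneq (w ord_max 0) 0.
    exact: Tmap_perturb_last w_last0 M_ge0 (fun x Kx => K_bound x Kx ord_max) eps2_gt0.
  exists w; split=> // [|x _]; last by rewrite subrr normr0 ltW.
  apply: norm_mul_lt1 C_gt0 _ _ dt_gt0 dt_lt; rewrite le_max ?lexx ?orbT //.
  by apply/orP; right; exact: (le_bigmax _ (fun i : 'I_n.+1 => `|w i 0|) ord_max).
have [L [f [nn_f f_approx]]] :=
  Tmap_approx_last_nz beta alpha01 w'_nz w'_small K_bound eps2_gt0.
exists L, f; split=> // x Kx; have [f_but_last f_last] := f_approx x Kx.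
rewrite enorm_Tmap_sub //; apply: le_trans (ler_distD (Tmap a dt beta w' x ord_max 0) _ _) _.
by rewrite [eps]splitr lerD ?w'_close.
Qed.
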